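(* Let $G$ be a finite abelian group and let $1\leq p,q\leq 2$. Let $\Sigma\subset\widehat{G}$ satisfy the $(p,q)$-restriction estimate with constant $\rho_{p,q}(\Sigma)$, i.e. $$\Bigl(\sum_{\chi\in\Sigma}|\widehat f(\chi)|^q\Bigr)^{1/q}\leq \rho_{p,q}(\Sigma)\Bigl(\sum_{x\in G}|f(x)|^p\Bigr)^{1/p}\quad\text{for all } f:G\to\mathbb{C}.$$ Let $S\subset G$ be such that $\rho_{p,q}(\Sigma)\,|S|^{1/p}<|G|^{\frac1q-\frac12}$. Then $(S,\Sigma)$ is a strong annihilating pair: for every $f:G\to\mathbb{C}$, $$\|f\|_{L^2(G)}\leq A_{ann}(S,\Sigma)\bigl(\|f\|_{L^2(G\setminus S)}+\|\widehat f\|_{L^2(\widehat G\setminus\Sigma)}\bigr),\qquad A_{ann}(S,\Sigma)=1+\frac{|S|^{1/2}\,|\widehat G\setminus\Sigma|^{\frac1q-\frac12}}{|G|^{\frac1q-\frac12}-\rho_{p,q}(\Sigma)|S|^{1/p}}.$$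
   Context: $G$ and $\widehat G$ (the group of characters $\chi:G\to\{|z|=1\}$) are equipped with counting measure, $|\cdot|$ denotes cardinality, and $|\widehat G|=|G|$. The Fourier transform is $\widehat f(\chi)=|G|^{-1/2}\sum_{x\in G}f(x)\overline{\chi(x)}$, which is unitary $L^2(G)\to L^2(\widehat G)$. All $L^r$ norms are with respect to counting measure. *)

From mathcomp Require Import all_boot all_order all_algebra.
From mathcomp Require Import reals exp complex.
Set Implicit Arguments. Unset Strict Implicit. Unset Printing Implicit Defensive.
Import Order.TTheory GRing.Theory Num.Theory.
Local Open Scope ring_scope.

Definition cabs (R : realType) (z : R[i]) : R := ComplexField.Normc.normc z.

Definition is_character (R : realType) (G : finZmodType) (chi : G -> R[i]) :=
  (forall x y : G, chi (x + y) = chi x * chi y) /\ (forall x : G, cabs (chi x) = 1).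

Definition enumerates_dual (R : realType) (G : finZmodType) (ghat : seq {ffun G -> R[i]}) :=
  uniq ghat /\ forall chi : {ffun G -> R[i]}, chi \in ghat <-> is_character chi.

Definition fourier (R : realType) (G : finZmodType) (f : G -> R[i]) (chi : G -> R[i]) : R[i] :=
  (real_complex R ((Num.sqrt (#|G|%:R : R))^-1)) * \sum_(x : G) f x * (chi x)^*.

Definition LnormG (R : realType) (G : finZmodType) (r : R) (D : {pred G}) (f : G -> R[i]) : R :=
  (\sum_(x in D) cabs (f x) `^ r) `^ r^-1.

Definition LnormD (R : realType) (G : finZmodType) (r : R) (ghat : seq {ffun G -> R[i]})
    (P : {pred {ffun G -> R[i]}}) (F : {ffun G -> R[i]} -> R[i]) : R :=
  (\sum_(chi <- ghat | P chi) cabs (F chi) `^ r) `^ r^-1.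

Definition restriction_estimate (R : realType) (G : finZmodType) (ghat : seq {ffun G -> R[i]})
    (Sigma : {pred {ffun G -> R[i]}}) (p q rho : R) :=
  forall f : G -> R[i],
    LnormD q ghat Sigma (fun chi => fourier f chi) <= rho * LnormG p [pred x | true] f.

(* Fourier inversion and Hoelder's inequality give |G|^(1/q-1/2) |g x| <= ||g^||_q.
   Apply this to g = f 1_S at a point where |f| attains its maximum M on S, and
   split ||g^||_q over Sigma and its complement.  On Sigma the restriction estimate
   gives at most rho |S|^(1/p) M.  Off Sigma, Hoelder bounds the l^q norm by
   |G^ \ Sigma|^(1/q-1/2) times the l^2 norm, and since g^ = f^ - (f 1_(G\S))^,
   Plancherel bounds that l^2 norm by ||f^||_(L^2(G^\Sigma)) + ||f||_(L^2(G\S)).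
   The hypothesis rho |S|^(1/p) < |G|^(1/q-1/2) turns this into a bound on M, and
   ||f||_2 <= ||f||_(L^2(G\S)) + |S|^(1/2) M.
   Inversion and Plancherel need the characters to separate points; a separating
   character is built by extending characters from subgroups one element at a time. *)

From mathcomp Require Import all_boot all_order all_algebra all_fingroup.
From mathcomp Require Import reals exp complex.
From mathcomp Require Import ring lra zify.
Set Implicit Arguments. Unset Strict Implicit. Unset Printing Implicit Defensive.
Import Order.TTheory GRing.Theory Num.Theory.
Local Open Scope ring_scope.

Section RealInequalities.
Variable R : realType.

Lemma powR_le_affine (b t : R) : 0 <= b -> 0 < t <= 1 -> b `^ t <= t * b + (1 - t).
Proof.
move=> b0 /andP[t0 t1].
have [->|t_neq1] := eqVneq t 1; first by rewrite powRr1 // mul1r subrr addr0.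
have t_lt1 : t < 1 by rewrite lt_neqAle t_neq1 t1.
have := @conjugate_powR R (b `^ t) 1 t^-1 (1 - t)^-1 (powR_ge0 _ _) ler01.
rewrite !invr_gt0 t0 subr_gt0 t_lt1 !invrK addrC subrK => /(_ isT isT erefl).
by rewrite mulr1 -powRrM mulfV ?gt_eqF // powRr1 // powR1 mul1r mulrC.
Qed.

(* Hoelder's inequality against the constant 1: the tangent line of the concave
   map [a |-> a `^ t] at the mean of the [a i] bounds every term. *)
Lemma sum_powR_le (I : eqType) (r : seq I) (P : pred I) (a : I -> R) (t : R) :
  (forall i, 0 <= a i) -> 0 < t <= 1 ->
  \sum_(i <- r | P i) a i `^ t <= (count P r)%:R `^ (1 - t) * (\sum_(i <- r | P i) a i) `^ t.
Proof.
move=> a0 t01; have /andP[t0 t1] := t01.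
rewrite -!(big_filter r P) -size_filter; move: (filter P r) => {}r.
set S := \sum_(i <- r) a i; set K : R := (size r)%:R.
have [S_eq0|S_neq0] := eqVneq S 0.
  rewrite big_seq big1 ?mulr_ge0 ?powR_ge0 // => i ri.
  move: S_eq0; rewrite /S => /eqP; rewrite psumr_eq0 // => /allP/(_ i ri)/eqP ->.
  by rewrite powR0 ?gt_eqF.
have S_gt0 : 0 < S by rewrite lt_neqAle eq_sym S_neq0 sumr_ge0.
have K_gt0 : 0 < K.
  by rewrite ltr0n lt0n; apply: contra S_neq0 => /nilP r0; rewrite /S r0 big_nil.
pose lam := S / K.
have lam_gt0 : 0 < lam by rewrite divr_gt0.
have termwise i : a i `^ t <= lam `^ t * (t * (a i / lam) + (1 - t)).
  have {1}-> : a i = lam * (a i / lam) by rewrite mulrC mulfVK ?gt_eqF.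
  have ai_lam : 0 <= a i / lam := divr_ge0 (a0 i) (ltW lam_gt0).
  rewrite powRM ?(ltW lam_gt0) // ler_pM2l ?powR_gt0 //.
  exact: powR_le_affine.
apply: le_trans (ler_sum _ (fun i _ => termwise i)) _.
rewrite -mulr_sumr big_split /= -mulr_sumr -mulr_suml -/S big_const_seq iter_addr_0.
have -> : t * (S / lam) + (1 - t) *+ count predT r = K.
  by rewrite count_predT /lam -mulr_natr -/K; field; rewrite !gt_eqF.
have K_pow : (K^-1) `^ t * K = K `^ (1 - t).
  rewrite powRB ?(lt0r_neq0 K_gt0) ?implybT // powRr1 ?(ltW K_gt0) // mulrC; congr (_ * _).
  by rewrite -powR_inv1 ?(ltW K_gt0) // -powRrM mulN1r powRN.
by rewrite /lam powRM ?invr_ge0 ?(ltW S_gt0) ?(ltW K_gt0) // -mulrA K_pow mulrC.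
Qed.

Lemma powRD_le (a b t : R) : 0 <= a -> 0 <= b -> 0 < t <= 1 ->
  (a + b) `^ t <= a `^ t + b `^ t.
Proof.
move=> a0 b0 /andP[t0 t1].
have [/eqP|s_neq0] := eqVneq (a + b) 0.
  by rewrite paddr_eq0 // => /andP[/eqP-> /eqP->]; rewrite addr0 powR0 ?gt_eqF // addr0.
set s := a + b; have s_gt0 : 0 < s by rewrite lt_neqAle eq_sym s_neq0 addr_ge0.
have le_powR x : 0 <= x -> x <= s -> x / s <= (x / s) `^ t.
  move=> x0 xs; have [->|x_neq0] := eqVneq x 0; first by rewrite mul0r powR_ge0.
  apply: ger1_powR => //; rewrite divr_gt0 ?ler_pdivrMr ?mul1r //.
  by rewrite lt_neqAle eq_sym x_neq0.
have -> : a `^ t + b `^ t = s `^ t * ((a / s) `^ t + (b / s) `^ t).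
  rewrite mulrDr -!powRM ?divr_ge0 ?(ltW s_gt0) //.
  by rewrite !(mulrC s) !mulfVK ?gt_eqF.
rewrite -[leLHS]mulr1 ler_wpM2l ?powR_ge0 //.
apply: le_trans (lerD (le_powR a a0 _) (le_powR b b0 _)); rewrite ?lerDl ?lerDr //.
by rewrite -mulrDl mulfV ?gt_eqF.
Qed.

Lemma CauchySchwarz_sum (I : Type) (r : seq I) (P : pred I) (x y : I -> R) :
  (\sum_(i <- r | P i) x i * y i) ^+ 2 <=
  (\sum_(i <- r | P i) x i ^+ 2) * (\sum_(i <- r | P i) y i ^+ 2).
Proof.
rewrite expr2 !big_distrl /=.
under eq_bigr do rewrite big_distrr /=.
under [X in _ <= X]eq_bigr do rewrite big_distrr /=.
set L := (X in X <= _); set Rs := (X in _ <= X).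
have RsE : Rs = \sum_(i <- r | P i) \sum_(j <- r | P j) x j ^+ 2 * y i ^+ 2.
  by rewrite /Rs exchange_big.
(* Lagrange: the gap is half the sum of the squares (x i y j - x j y i)^2. *)
suff : L + L <= Rs + Rs by lra.
rewrite {2}RsE -!big_split /=; apply: ler_sum => i _; rewrite -!big_split /=.
apply: ler_sum => j _; have := sqr_ge0 (x i * y j - x j * y i); nra.
Qed.

Lemma Minkowski_sum (I : Type) (r : seq I) (P : pred I) (x y z : I -> R) :
  (forall i, 0 <= x i) -> (forall i, 0 <= y i) -> (forall i, 0 <= z i) ->
  (forall i, z i <= x i + y i) ->
  Num.sqrt (\sum_(i <- r | P i) z i ^+ 2) <=
  Num.sqrt (\sum_(i <- r | P i) x i ^+ 2) + Num.sqrt (\sum_(i <- r | P i) y i ^+ 2).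
Proof.
move=> x0 y0 z0 zxy.
set X := \sum_(i <- r | P i) x i ^+ 2; set Y := \sum_(i <- r | P i) y i ^+ 2.
have X0 : 0 <= X by apply: sumr_ge0 => i _; apply: sqr_ge0.
have Y0 : 0 <= Y by apply: sumr_ge0 => i _; apply: sqr_ge0.
have xy_le : \sum_(i <- r | P i) x i * y i <= Num.sqrt X * Num.sqrt Y.
  rewrite -sqrtrM // (le_trans (ler_norm _)) // -sqrtr_sqr ler_sqrt ?mulr_ge0 //.
  exact: CauchySchwarz_sum.
rewrite -[leRHS]ger0_norm ?addr_ge0 ?sqrtr_ge0 // -sqrtr_sqr ler_sqrt ?sqr_ge0 //.
apply: (@le_trans _ _ (\sum_(i <- r | P i) (x i + y i) ^+ 2)).
  by apply: ler_sum => i _; rewrite ler_sqr ?nnegrE ?addr_ge0.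
under eq_bigr do rewrite sqrrD.
rewrite !big_split /= -/X -/Y sqrrD !sqr_sqrtr // mulr2n.
lra.
Qed.

Lemma sum_powR2_sqrt (I : Type) (r : seq I) (P : pred I) (F : I -> R) :
  (forall i, 0 <= F i) ->
  (\sum_(i <- r | P i) F i `^ 2) `^ 2^-1 = Num.sqrt (\sum_(i <- r | P i) F i ^+ 2).
Proof.
move=> F0; rewrite powR12_sqrt; last by apply: sumr_ge0 => i _; apply: powR_ge0.
by congr Num.sqrt; apply: eq_bigr => i _; rewrite powR_mulrn.
Qed.

End RealInequalities.

Section ComplexModulus.
Variable R : realType.
Implicit Types x y z : R[i].

Lemma cabsE z : (cabs z)%:C%C = `|z|.
Proof. by case: z => a b; rewrite normc_def. Qed.

Lemma cabs_ge0 z : 0 <= cabs z.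
Proof. by case: z => a b; exact: sqrtr_ge0. Qed.

Lemma cabs0 : cabs (0 : R[i]) = 0.
Proof. exact: ComplexField.Normc.normc0. Qed.

Lemma cabs1 : cabs (1 : R[i]) = 1.
Proof. exact: ComplexField.Normc.normc1. Qed.

Lemma cabs_eq0 z : (cabs z == 0) = (z == 0).
Proof. by apply/eqP/eqP => [/ComplexField.Normc.eq0_normc //|->]; exact: cabs0. Qed.

Lemma cabsN z : cabs (- z) = cabs z.
Proof. exact: normcN. Qed.

Lemma cabsM x y : cabs (x * y) = cabs x * cabs y.
Proof. exact: ComplexField.Normc.normcM. Qed.

Lemma cabsX z n : cabs (z ^+ n) = cabs z ^+ n.
Proof. by elim: n => [|n IH]; rewrite ?expr0 ?cabs1 // !exprS cabsM IH. Qed.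

Lemma cabsD x y : cabs (x + y) <= cabs x + cabs y.
Proof. exact: le_normcD. Qed.

Lemma cabs_sum (I : Type) (r : seq I) (P : pred I) (F : I -> R[i]) :
  cabs (\sum_(i <- r | P i) F i) <= \sum_(i <- r | P i) cabs (F i).
Proof. exact: (@ler_norm_sum R (Rcomplex R) I r F P). Qed.

Lemma cabs_real (c : R) : 0 <= c -> cabs c%:C%C = c.
Proof. by move=> c0; rewrite /cabs /= expr0n addr0 sqrtr_sqr ger0_norm. Qed.

Lemma cabs_sqr z : (cabs z ^+ 2)%:C%C = z * z^*.
Proof. by rewrite -normCK -cabsE rmorphXn. Qed.

End ComplexModulus.

Lemma eq0_mul_fixed (K : idomainType) (a s : K) : a != 1 -> a * s = s -> s = 0.
Proof.
move=> a_neq1 /eqP; rewrite -subr_eq0 -{2}[s]mul1r -mulrBl mulf_eq0 subr_eq0.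
by rewrite (negbTE a_neq1) => /eqP.
Qed.

Section Characters.
Variables (R : realType) (G : finZmodType).
Implicit Types chi psi : G -> R[i].

Lemma character_neq0 chi x : is_character chi -> chi x != 0.
Proof. by case=> _ chi1; rewrite -cabs_eq0 chi1 oner_eq0. Qed.

Lemma character0 chi : is_character chi -> chi 0 = 1.
Proof.
move=> chiP; apply: (mulfI (character_neq0 0 chiP)).
by rewrite mulr1 -chiP.1 addr0.
Qed.

Lemma character_conj chi x : is_character chi -> (chi x)^* = chi (- x).
Proof.
move=> chiP; apply: (mulfI (character_neq0 x chiP)).
by rewrite -cabs_sqr chiP.2 expr1n -chiP.1 subrr character0.
Qed.

Lemma characterM chi psi :
  is_character chi -> is_character psi -> is_character (fun x => chi x * psi x).
Proof.
move=> [chiM chi1] [psiM psi1]; split => [x y|x]; first by rewrite chiM psiM; ring.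
by rewrite cabsM chi1 psi1 mulr1.
Qed.

Lemma characterN chi : is_character chi -> is_character (fun x => chi (- x)).
Proof. by move=> [chiM chi1]; split => [x y|x]; rewrite ?opprD ?chiM. Qed.

Lemma character_ffun chi : is_character chi -> is_character [ffun x => chi x].
Proof. by move=> [chiM chi1]; split => [x y|x]; rewrite !ffunE ?chiM ?chi1. Qed.

Lemma character1 : is_character (fun _ : G => 1 : R[i]).
Proof. by split => [x y|x]; rewrite ?mulr1 ?cabs1. Qed.

Lemma sum_character (chi : {ffun G -> R[i]}) : is_character chi ->
  \sum_x chi x = if chi == [ffun=> 1] then #|G|%:R else 0.
Proof.
move=> chiP; case: eqP => [->|/eqP chi_neq1].
  by rewrite (eq_bigr (fun=> 1)) => [|x _]; rewrite ?sumr_const ?ffunE.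
have [y chiy_neq1] : exists y, chi y != 1.
  apply/existsP; apply: contraR chi_neq1; rewrite negb_exists => /forallP chi1.
  by apply/eqP/ffunP => x; rewrite ffunE; apply/eqP; rewrite -[_ == _]negbK chi1.
apply: eq0_mul_fixed chiy_neq1 _.
rewrite mulr_sumr [RHS](reindex_inj (addIr y)) /=.
by apply: eq_bigr => x _; rewrite chiP.1 mulrC.
Qed.

End Characters.

Section Separation.
Variables (R : realType) (G : finZmodType).
Implicit Types (H : {set G}) (chi : G -> R[i]).

Definition subzmod H := 0 \in H /\ {in H &, forall x y, x - y \in H}.

Definition is_character_on H chi :=
  {in H &, forall x y, chi (x + y) = chi x * chi y} /\ {in H, forall x, cabs (chi x) = 1}.

Lemma subzmodD H x y : subzmod H -> x \in H -> y \in H -> x + y \in H.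
Proof.
move=> [H0 HB] Hx Hy; have Hny : - y \in H by rewrite -sub0r HB.
by rewrite -[y]opprK HB.
Qed.

Lemma character_on0 H chi : subzmod H -> is_character_on H chi -> chi 0 = 1.
Proof.
move=> [H0 _] [chiM chi1]; have chi0_neq0 : chi 0 != 0 by rewrite -cabs_eq0 chi1 ?oner_eq0.
by apply: (mulfI chi0_neq0); rewrite mulr1 -chiM ?addr0.
Qed.

Lemma exists_min_multiple H g : subzmod H ->
  exists m, [/\ (0 < m)%N, g *+ m \in H & forall k, (0 < k < m)%N -> g *+ k \notin H].
Proof.
move=> [H0 _]; have ex_m : exists m, (0 < m)%N && (g *+ m \in H).
  by exists #[g]%g; rewrite order_gt0 -FinRing.zmodXgE expg_order FinRing.zmod1gE.
case: (ex_minnP ex_m) => m /andP[m_gt0 gmH] m_min; exists m; split => // k /andP[k_gt0 km].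
by apply: contraL km => gkH; rewrite -leqNgt m_min ?k_gt0.
Qed.

(* [m] is the order of [g] modulo [H] and [w] an [m]-th root of [chi (g *+ m)] of
   modulus one.  Every element of [ext_set] is uniquely [h + g *+ k] with [h \in H]
   and [k < m], and [ext_char] maps it to [chi h * w ^+ k]. *)
Section Extension.
Variables (H : {set G}) (chi : G -> R[i]) (g : G) (m : nat) (w : R[i]).
Hypotheses (zH : subzmod H) (chiH : is_character_on H chi).
Hypotheses (m_gt0 : (0 < m)%N) (gmH : g *+ m \in H).
Hypothesis m_min : forall k, (0 < k < m)%N -> g *+ k \notin H.
Hypotheses (wm : w ^+ m = chi (g *+ m)) (w1 : cabs w = 1).

Definition ext_set : {set G} := [set x | [exists k : 'I_m, x - g *+ k \in H]].

Definition ext_char x : R[i] :=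
  if [pick k : 'I_m | x - g *+ k \in H] is Some k then chi (x - g *+ k) * w ^+ k else 1.

Lemma ext_index_uniq h h' k k' : h \in H -> h' \in H -> (k < m)%N -> (k' < m)%N ->
  h + g *+ k = h' + g *+ k' -> k = k'.
Proof.
wlog le_kk' : h h' k k' / (k <= k')%N => [wlog_le|Hh Hh' km k'm E].
  move=> Hh Hh' km k'm E; case: (leqP k k') => [le|/ltnW le]; first exact: (wlog_le h h' k k').
  by apply/esym/(wlog_le h' h k' k).
have gH : g *+ (k' - k) \in H.
  suff -> : g *+ (k' - k) = h - h' by exact: zH.2.
  by apply/eqP; rewrite mulrnBr // subr_eq addrAC E [h' + _]addrC addrK.
suff : ~~ (0 < k' - k)%N by lia.
by apply: contraL gH => pos; apply: m_min; rewrite pos /=; lia.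
Qed.

Lemma ext_setP x :
  reflect (exists h k, [/\ h \in H, (k < m)%N & x = h + g *+ k]) (x \in ext_set).
Proof.
rewrite inE; apply: (iffP existsP) => [[k Hk]|[h [k [Hh km ->]]]].
  by exists (x - g *+ k), (nat_of_ord k); rewrite subrK.
by exists (Ordinal km); rewrite addrK.
Qed.

Lemma ext_charE h k : h \in H -> (k < m)%N -> ext_char (h + g *+ k) = chi h * w ^+ k.
Proof.
move=> Hh km; rewrite /ext_char; case: pickP => [k' Hk'|none]; last first.
  by have := none (Ordinal km); rewrite /= addrK Hh.
have -> : nat_of_ord k' = k.
  by apply/esym/(ext_index_uniq Hh Hk' km (ltn_ord k')); rewrite subrK.
by rewrite addrK.
Qed.

Lemma subzmod_ext : subzmod ext_set.
Proof.
split; first by apply/ext_setP; exists 0, 0%N; rewrite mulr0n addr0 zH.1.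
move=> _ _ /ext_setP[h [k [Hh km ->]]] /ext_setP[h' [k' [Hh' k'm ->]]].
apply/ext_setP; rewrite opprD addrACA.
have Hhh' : h - h' \in H by exact: zH.2.
have [le_k'k|lt_kk'] := leqP k' k.
  by exists (h - h'), (k - k')%N; rewrite mulrnBr //; split => //; lia.
(* borrow one period: g *+ k - g *+ k' = g *+ (m + k - k') - g *+ m *)
have le_k'mk : (k' <= m + k)%N by lia.
exists (h - h' - g *+ m), (m + k - k')%N; split; [exact: zH.2 | lia |].
by rewrite mulrnBr // mulrnDr -[g *+ m + _ - _]addrA subrKA.
Qed.

Lemma ext_char_on : is_character_on ext_set ext_char.
Proof.
split => [_ _ /ext_setP[h [k [Hh km ->]]] /ext_setP[h' [k' [Hh' k'm ->]]]|]; last first.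
  move=> _ /ext_setP[h [k [Hh km ->]]].
  by rewrite ext_charE // cabsM cabsX chiH.2 // w1 expr1n mulr1.
have Hhh' := subzmodD zH Hh Hh'.
rewrite addrACA -mulrnDr (ext_charE Hh km) (ext_charE Hh' k'm).
have [lt_m|ge_m] := ltnP (k + k') m.
  by rewrite ext_charE // chiH.1 // exprD; ring.
(* carry: g *+ (k + k') = g *+ m + g *+ (k + k' - m), and chi (g *+ m) = w ^+ m *)
have -> : (k + k' = m + (k + k' - m))%N by lia.
rewrite mulrnDr addrA ext_charE ?subzmodD //; last lia.
by rewrite !chiH.1 ?subzmodD // -wm -mulrA -exprD subnKC // exprD; ring.
Qed.

Lemma sub_ext_set : {subset H <= ext_set}.
Proof. by move=> x Hx; apply/ext_setP; exists x, 0%N; rewrite mulr0n addr0. Qed.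

Lemma ext_char_extends : {in H, ext_char =1 chi}.
Proof.
by move=> x Hx; have := ext_charE Hx m_gt0; rewrite mulr0n addr0 expr0 mulr1.
Qed.

Lemma ext_char_gen : g \in ext_set /\ ext_char g = w.
Proof.
have [m_gt1|m_le1] := ltnP 1 m.
  have := ext_charE zH.1 m_gt1; rewrite add0r mulr1n (character_on0 zH chiH) mul1r expr1 => ->.
  by split => //; apply/ext_setP; exists 0, 1%N; rewrite add0r mulr1n zH.1.
have m1 : m = 1%N by lia.
move: gmH wm; rewrite m1 mulr1n expr1 => Hg ->.
by split; [exact: sub_ext_set | exact: ext_char_extends].
Qed.

End Extension.

Lemma exists_root_of_unity_neq1 m : (1 < m)%N -> exists2 w : R[i], w ^+ m = 1 & w != 1.
Proof.
move=> m_gt1; have m1_gt0 : (0 < m.-1)%N by lia.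
have [w wE] := @solve_monicpoly R[i] m.-1 (fun=> -1) m1_gt0.
(* w is a root of 1 + X + ... + X^(m-1) *)
have sum_w : \sum_(i < m) w ^+ i = 0.
  rewrite -(prednK (ltnW m_gt1)) big_ord_recr /= wE -big_split /=.
  by rewrite big1 // => i _; rewrite mulN1r subrr.
exists w; first by apply/eqP; rewrite -subr_eq0 subrX1 sum_w mulr0.
apply/eqP => w_eq1; move: sum_w; rewrite w_eq1.
under eq_bigr do rewrite expr1n.
by rewrite sumr_const card_ord => /eqP; rewrite pnatr_eq0; lia.
Qed.

Lemma cabs_eq1_of_exp (w : R[i]) m : (0 < m)%N -> cabs (w ^+ m) = 1 -> cabs w = 1.
Proof. by move=> m_gt0; rewrite cabsX => /eqP; rewrite pexpr_eq1 ?cabs_ge0 // => /eqP. Qed.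

Lemma extend_character_on H chi g : subzmod H -> is_character_on H chi ->
  exists H' (chi' : G -> R[i]), [/\ subzmod H', is_character_on H' chi',
    {subset H <= H'}, {in H, chi' =1 chi} & g \in H'].
Proof.
move=> zH chiH; have [m [m_gt0 gmH m_min]] := exists_min_multiple g zH.
pose w := m.-root (chi (g *+ m)).
have wm : w ^+ m = chi (g *+ m) by rewrite rootCK.
have w1 : cabs w = 1 by apply: (cabs_eq1_of_exp m_gt0); rewrite wm chiH.2.
exists (ext_set H g m), (ext_char H chi g m w); split.
- exact: subzmod_ext.
- exact: ext_char_on.
- exact: sub_ext_set.
- exact: ext_char_extends.
- by have [] := ext_char_gen zH chiH m_gt0 gmH m_min wm.
Qed.

Lemma exists_separating_character_on z : z != 0 -> forall s : seq G,
  exists H chi, [/\ subzmod H, is_character_on H chi, z \in H, chi z != 1 & {subset s <= H}].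
Proof.
move=> z_neq0; elim=> [|a s [H [chi [zH chiH Hz chiz sH]]]]; last first.
  have [H' [chi' [zH' chiH' sHH' chi'E Ha]]] := extend_character_on a zH chiH.
  exists H', chi'; split; rewrite ?chi'E ?sHH' // => x.
  by rewrite inE => /predU1P[->|/sH/sHH'].
pose H0 : {set G} := [set 0].
have zH0 : subzmod H0.
  by split; rewrite ?set11 // => x y; rewrite !inE => /eqP-> /eqP->; rewrite subrr.
have chiH0 : is_character_on H0 (fun=> 1) by split => * //; rewrite ?mulr1 ?cabs1.
have [m [m_gt0 zmH m_min]] := exists_min_multiple z zH0.
have m_gt1 : (1 < m)%N.
  by rewrite ltn_neqAle m_gt0 andbT; apply: contraNneq z_neq0 => m1; rewrite -m1 inE in zmH.
have [w wm w_neq1] := exists_root_of_unity_neq1 m_gt1.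
have w1 : cabs w = 1 by apply: (cabs_eq1_of_exp (ltnW m_gt1)); rewrite wm cabs1.
have [Hz chiz] := ext_char_gen zH0 chiH0 m_gt0 zmH m_min wm.
exists (ext_set H0 z m), (ext_char H0 (fun=> 1) z m w); split => //; rewrite ?chiz //.
- exact: subzmod_ext.
- exact: ext_char_on.
Qed.

Lemma separating_character z : z != 0 ->
  exists2 chi : {ffun G -> R[i]}, is_character chi & chi z != 1.
Proof.
move=> z_neq0; have [H [chi [_ [chiM chi1] _ chiz sH]]] :=
  exists_separating_character_on z_neq0 (enum G).
have HT x : x \in H by apply: sH; rewrite mem_enum.
exists [ffun x => chi x]; last by rewrite ffunE.
by split => [x y|x]; rewrite !ffunE ?chiM ?chi1.
Qed.

End Separation.

Lemma sqrtr_invM (R : rcfType) (a : R) : 0 <= a -> (Num.sqrt a)^-1 * a = Num.sqrt a.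
Proof.
move=> a0; have [->|a_neq0] := eqVneq a 0; first by rewrite sqrtr0 invr0 mul0r.
have sa_neq0 : Num.sqrt a != 0 by rewrite sqrtr_eq0 -ltNge lt_neqAle eq_sym a_neq0.
by rewrite -{2}(sqr_sqrtr a0) expr2 mulKf.
Qed.

Section Fourier.
Variables (R : realType) (G : finZmodType).
Implicit Types f g : G -> R[i].

Lemma eq_fourier f g chi : f =1 g -> fourier f chi = fourier g chi.
Proof. by move=> fg; rewrite /fourier; congr (_ * _); apply: eq_bigr => x _; rewrite fg. Qed.

Lemma fourierD f g chi : fourier (fun x => f x + g x) chi = fourier f chi + fourier g chi.
Proof.
rewrite /fourier -mulrDr -big_split; congr (_ * _).
by apply: eq_bigr => x _; rewrite mulrDl.
Qed.

End Fourier.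

Section Dual.
Variables (R : realType) (G : finZmodType) (ghat : seq {ffun G -> R[i]}).
Hypothesis ghatP : enumerates_dual ghat.

Let dual_character (chi : {ffun G -> R[i]}) : chi \in ghat -> is_character chi.
Proof. exact: (ghatP.2 chi).1. Qed.

Let character_in_dual (chi : {ffun G -> R[i]}) : is_character chi -> chi \in ghat.
Proof. exact: (ghatP.2 chi).2. Qed.

Lemma sum_dual z : \sum_(chi <- ghat) chi z = if z == 0 then (size ghat)%:R else 0.
Proof.
case: eqP => [->|/eqP z_neq0].
  rewrite big_seq (eq_bigr (fun=> 1)) => [|chi chiD]; last exact/character0/dual_character.
  by rewrite -big_seq big_const_seq iter_addr_0 count_predT.
have [psi psiP psiz] := separating_character R z_neq0.
(* multiplication by psi permutes the dual group *)
pose mul_psi (chi : {ffun G -> R[i]}) : {ffun G -> R[i]} := [ffun x => psi x * chi x].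
have mul_psi_inj : injective mul_psi.
  move=> chi chi' E; apply/ffunP => x.
  have := congr1 (fun F : {ffun G -> R[i]} => F x) E; rewrite /mul_psi !ffunE.
  by move=> psi_chi; apply: (mulfI (character_neq0 x psiP)).
have perm_psi : perm_eq ghat (map mul_psi ghat).
  apply: uniq_perm; rewrite ?map_inj_uniq //; try exact: ghatP.1.
  move=> chi; apply/idP/mapP => [chiD|[chi' chi'D ->]]; last first.
    by apply/character_in_dual/character_ffun/characterM/dual_character.
  exists [ffun x => psi (- x) * chi x]; last first.
    by apply/ffunP => x; rewrite !ffunE mulrA -psiP.1 subrr character0 ?mul1r.
  by apply/character_in_dual/character_ffun/characterM/dual_character;
    [exact: characterN|].
apply: eq0_mul_fixed psiz _.
rewrite mulr_sumr [RHS](perm_big _ perm_psi) big_map.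
by apply: eq_bigr => chi _; rewrite ffunE.
Qed.

Lemma size_dual : size ghat = #|G|.
Proof.
have one_dual : [ffun=> 1] \in ghat by apply/character_in_dual/character_ffun/character1.
apply/eqP; rewrite -(eqr_nat R[i]); apply/eqP.
transitivity (\sum_(chi <- ghat) \sum_x chi x).
  rewrite exchange_big /= (bigD1 0) //= sum_dual eqxx big1 ?addr0 // => x x_neq0.
  by rewrite sum_dual (negbTE x_neq0).
rewrite (eq_big_seq _ (fun chi chiD => sum_character (dual_character chiD))).
by rewrite -big_mkcond /= big_const_seq iter_addr_0 (count_uniq_mem _ ghatP.1) one_dual.
Qed.

Lemma fourier_inversion f x :
  \sum_(chi <- ghat) fourier f chi * chi x = (Num.sqrt (#|G|%:R : R))%:C%C * f x.
Proof.
have dual_orth y : \sum_(chi <- ghat) (chi y)^* * chi x = if y == x then #|G|%:R else 0.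
  rewrite -size_dual eq_sym -subr_eq0 -sum_dual; apply: eq_big_seq => chi /dual_character chiP.
  by rewrite character_conj // -chiP.1 addrC.
under eq_bigr do rewrite /fourier -mulrA mulr_suml.
rewrite -mulr_sumr exchange_big /=.
under eq_bigr => y _.
  under eq_bigr do rewrite -mulrA.
  by rewrite -mulr_sumr dual_orth; over.
rewrite (bigD1 x) //= eqxx big1 ?addr0 => [|y /negbTE->]; last by rewrite mulr0.
by rewrite mulrCA -(rmorph_nat (real_complex R)) -rmorphM sqrtr_invM ?ler0n // mulrC.
Qed.

Lemma fourier_inversion_bound f x :
  Num.sqrt (#|G|%:R : R) * cabs (f x) <= \sum_(chi <- ghat) cabs (fourier f chi).
Proof.
rewrite -[Num.sqrt _](@cabs_real R) ?sqrtr_ge0 // -cabsM -fourier_inversion.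
apply: le_trans (cabs_sum _ _ _) _; rewrite big_seq [leRHS]big_seq.
by apply: ler_sum => chi /dual_character chiP; rewrite cabsM chiP.2 mulr1.
Qed.

Lemma plancherel h : \sum_(chi <- ghat) cabs (fourier h chi) ^+ 2 = \sum_x cabs (h x) ^+ 2.
Proof.
pose c : R := (Num.sqrt (#|G|%:R : R))^-1.
have conj_fourier chi : (fourier h chi)^* = c%:C%C * \sum_y (h y)^* * chi y.
  rewrite /fourier rmorphM rmorph_sum /=; congr (_ * _).
    by apply/conj_Creal/complex_realP; exists c.
  by apply: eq_bigr => y _; rewrite rmorphM /= conjCK.
apply: complexI; rewrite !rmorph_sum /=.
under eq_bigr do rewrite cabs_sqr conj_fourier mulrCA mulr_sumr.
under [RHS]eq_bigr do rewrite cabs_sqr.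
rewrite -mulr_sumr exchange_big /=.
under eq_bigr => y _.
  under eq_bigr do rewrite mulrCA.
  by rewrite -mulr_sumr fourier_inversion; over.
have sqrt_neq0 : Num.sqrt (#|G|%:R : R) != 0.
  by rewrite gt_eqF // sqrtr_gt0 ltr0n; apply/card_gt0P; exists 0.
rewrite /= mulr_sumr; apply: eq_bigr => y _.
by rewrite mulrCA (mulrA c%:C%C) -(rmorphM (real_complex R)) mulVf // rmorph1 mul1r mulrC.
Qed.

End Dual.

Section Norms.
Variables (R : realType) (G : finZmodType).
Implicit Types (p q : R) (S : {set G}) (f : G -> R[i]).
Implicit Types (ghat : seq {ffun G -> R[i]}) (F : {ffun G -> R[i]} -> R[i]).

Lemma restriction_estimate_ge0 ghat Sigma p q rho :
  restriction_estimate ghat Sigma p q rho -> 0 <= rho.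
Proof.
move=> /(_ (fun=> 1)); rewrite /LnormG.
under eq_bigr do rewrite cabs1 powR1.
rewrite sumr_const (_ : #|_| = #|G|); last by apply: eq_card => x; rewrite !inE.
move=> /(le_trans (powR_ge0 _ _)); rewrite pmulr_lge0 // powR_gt0 // ltr0n.
by apply/card_gt0P; exists 0.
Qed.

Lemma LnormG_split p S f : 1 <= p ->
  LnormG p [pred x | true] f <= LnormG p S f + LnormG p [pred x | x \notin S] f.
Proof.
move=> p1; have p_gt0 : 0 < p by apply: lt_le_trans p1.
have sumE (P : pred G) :
    \sum_(x in [pred x | true] | P x) cabs (f x) `^ p = \sum_(x | P x) cabs (f x) `^ p.
  by apply: eq_bigl => x; rewrite inE.
rewrite /LnormG (bigID (fun x => x \in S)) /= !sumE; apply: powRD_le.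
- by apply: sumr_ge0 => x _; apply: powR_ge0.
- by apply: sumr_ge0 => x _; apply: powR_ge0.
- by rewrite invr_gt0 p_gt0 invf_le1.
Qed.

Lemma LnormG_le_card p S f M : 0 < p -> 0 <= M -> (forall x, x \in S -> cabs (f x) <= M) ->
  LnormG p S f <= #|S|%:R `^ p^-1 * M.
Proof.
move=> p_gt0 M0 fM; apply: (@le_trans _ _ ((\sum_(x in S) M `^ p) `^ p^-1)).
  apply: ge0_ler_powR; rewrite ?nnegrE.
  - by rewrite invr_ge0 ltW.
  - by apply: sumr_ge0 => x _; apply: powR_ge0.
  - by apply: sumr_ge0 => x _; apply: powR_ge0.
  apply: ler_sum => x Sx; apply: ge0_ler_powR; rewrite ?nnegrE ?cabs_ge0 ?fM //.
  exact: ltW.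
rewrite sumr_const -[M `^ p *+ _]mulr_natr powRM ?powR_ge0 ?ler0n // -powRrM mulfV ?gt_eqF //.
by rewrite powRr1 // mulrC.
Qed.

Lemma LnormG_supported p S f : 1 <= p -> (forall x, x \notin S -> f x = 0) ->
  LnormG p [pred x | true] f <= LnormG p S f.
Proof.
move=> p1 f0; have p_gt0 : 0 < p := lt_le_trans ltr01 p1.
apply: le_trans (LnormG_split S f p1) _.
rewrite [X in _ + X]/LnormG big1 => [|x]; last first.
  by rewrite inE => /f0->; rewrite cabs0 powR0 ?gt_eqF.
by rewrite powR0 ?addr0 // invr_eq0 gt_eqF.
Qed.

Lemma LnormD_split q ghat (Sigma : {pred {ffun G -> R[i]}}) F : 1 <= q ->
  LnormD q ghat predT F <= LnormD q ghat Sigma F + LnormD q ghat [pred chi | chi \notin Sigma] F.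
Proof.
move=> q1; have q_gt0 : 0 < q by apply: lt_le_trans q1.
rewrite /LnormD (bigID Sigma) /=; apply: powRD_le.
- by apply: sumr_ge0 => chi _; apply: powR_ge0.
- by apply: sumr_ge0 => chi _; apply: powR_ge0.
- by rewrite invr_gt0 q_gt0 invf_le1.
Qed.

Lemma LnormD_le_L2 q ghat (P : {pred {ffun G -> R[i]}}) F : 1 <= q <= 2 ->
  LnormD q ghat P F <=
  (size [seq chi <- ghat | P chi])%:R `^ (q^-1 - 2^-1) * LnormD 2 ghat P F.
Proof.
move=> /andP[q1 q2]; have q_gt0 : 0 < q by apply: lt_le_trans q1.
have two_neq0 : (2 : R) != 0 by rewrite pnatr_eq0.
have := @sum_powR_le R _ ghat P (fun chi => cabs (F chi) `^ 2) (q / 2) (fun=> powR_ge0 _ _).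
rewrite divr_gt0 // ler_pdivrMr // mul1r q2 => /(_ isT).
under eq_bigr do rewrite -powRrM mulrCA mulfV // mulr1.
have qV_ge0 : 0 <= q^-1 by rewrite invr_ge0 ltW.
move=> /(ge0_ler_powR qV_ge0).
rewrite !nnegrE sumr_ge0 ?mulr_ge0 ?powR_ge0 // => [/(_ isT isT) le_q|chi _]; last first.
  exact: powR_ge0.
rewrite /LnormD (le_trans le_q) // powRM ?powR_ge0 // -!powRrM size_filter.
have -> : (1 - q / 2) * q^-1 = q^-1 - 2^-1 by field; rewrite gt_eqF.
by have -> : q / 2 * q^-1 = 2^-1 by field; rewrite gt_eqF.
Qed.

End Norms.

Section FourierEstimates.
Variables (R : realType) (G : finZmodType) (ghat : seq {ffun G -> R[i]}).
Hypothesis ghatP : enumerates_dual ghat.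
Implicit Types (q : R) (S : {set G}) (f g : G -> R[i]).

Lemma LnormD_fourier_ge_cabs q g x : 1 <= q ->
  #|G|%:R `^ (q^-1 - 2^-1) * cabs (g x) <= LnormD q ghat predT (fun chi => fourier g chi).
Proof.
move=> q1; have q_gt0 : 0 < q by apply: lt_le_trans q1.
set n : R := #|G|%:R; have n_gt0 : 0 < n by rewrite ltr0n; apply/card_gt0P; exists 0.
have hoelder : \sum_(chi <- ghat) cabs (fourier g chi) <=
    n `^ (1 - q^-1) * LnormD q ghat predT (fun chi => fourier g chi).
  have := @sum_powR_le R _ ghat predT (fun chi => cabs (fourier g chi) `^ q) q^-1
    (fun=> powR_ge0 _ _).
  rewrite invr_gt0 q_gt0 invf_le1 // q1 count_predT size_dual // => /(_ isT).
  by under eq_bigr do rewrite -powRrM mulfV ?gt_eqF // powRr1 ?cabs_ge0 //.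
have sqrt_n : Num.sqrt n = n `^ (1 - q^-1) * n `^ (q^-1 - 2^-1).
  rewrite -powR12_sqrt ?(ltW n_gt0) // -powRD ?(lt0r_neq0 n_gt0) ?implybT //.
  by congr (_ `^ _); lra.
have := le_trans (fourier_inversion_bound ghatP g x) hoelder.
by rewrite sqrt_n -mulrA ler_pM2l ?powR_gt0.
Qed.

Lemma LnormD_fourier_restrict_le (P : {pred {ffun G -> R[i]}}) S f :
  LnormD 2 ghat P (fun chi => fourier (fun x => if x \in S then f x else 0) chi) <=
  LnormD 2 ghat P (fun chi => fourier f chi) + LnormG 2 [pred x | x \notin S] f.
Proof.
set g := fun x => if x \in S then f x else 0; set h := fun x => if x \in S then 0 else f x.
have fgh chi : fourier f chi = fourier g chi + fourier h chi.
  rewrite -fourierD; apply: eq_fourier => x.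
  by rewrite /g /h; case: (x \in S); rewrite ?addr0 ?add0r.
rewrite /LnormD /LnormG !sum_powR2_sqrt; try by move=> ?; apply: cabs_ge0.
apply: le_trans (@Minkowski_sum R _ ghat P (fun chi => cabs (fourier f chi))
  (fun chi => cabs (fourier h chi)) (fun chi => cabs (fourier g chi)) _ _ _ _) _;
  try by move=> ?; apply: cabs_ge0.
  move=> chi; rewrite -[fourier g chi]addr0 -(subrr (fourier h chi)) addrA -fgh.
  by apply: le_trans (cabsD _ _) _; rewrite cabsN.
rewrite lerD2l (le_trans (_ : _ <= Num.sqrt (\sum_(chi <- ghat) cabs (fourier h chi) ^+ 2))) //.
  rewrite ler_sqrt ?sumr_ge0 // => [|chi _]; last exact: sqr_ge0.
  by rewrite [leRHS](bigID P) /= lerDl sumr_ge0 // => chi _; apply: sqr_ge0.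
rewrite plancherel // ler_sqrt; last by apply: sumr_ge0 => x _; apply: sqr_ge0.
rewrite [leLHS](bigID (fun x => x \in S)) /= big1 ?add0r; last first.
  by move=> x Sx; rewrite /h Sx cabs0 expr0n.
rewrite (eq_big (fun x => x \in [pred x | x \notin S]) (fun x => cabs (f x) ^+ 2)) //.
by move=> x Sx; rewrite /h (negbTE Sx).
Qed.

End FourierEstimates.

Section StrongAnnihilation.
Variables (R : realType) (G : finZmodType) (ghat : seq {ffun G -> R[i]}).
Variables (Sigma : {pred {ffun G -> R[i]}}) (S : {set G}) (p q rho : R) (f : G -> R[i]).
Hypotheses (ghatP : enumerates_dual ghat) (p1 : 1 <= p) (hq : 1 <= q <= 2).
Hypothesis rest : restriction_estimate ghat Sigma p q rho.

Local Notation N := (#|G|%:R `^ (q^-1 - 2^-1)).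
Local Notation s := (#|S|%:R `^ p^-1).
Local Notation K := ((size [seq chi <- ghat | chi \notin Sigma])%:R `^ (q^-1 - 2^-1)).
Local Notation B := (LnormG 2 [pred x | x \notin S] f).
Local Notation F := (LnormD 2 ghat [pred chi | chi \notin Sigma] (fun chi => fourier f chi)).

Lemma max_on_support_le xm : xm \in S -> (forall x, x \in S -> cabs (f x) <= cabs (f xm)) ->
  N * cabs (f xm) <= rho * (s * cabs (f xm)) + K * (F + B).
Proof.
move=> Sxm xm_max; have /andP[q1 q2] := hq.
pose g x := if x \in S then f x else 0.
have g_supp x : x \notin S -> g x = 0 by rewrite /g => /negbTE->.
have g_le x : x \in S -> cabs (g x) <= cabs (f xm) by rewrite /g => Sx; rewrite Sx xm_max.
have := LnormD_fourier_ge_cabs ghatP g xm q1; rewrite {1}/g Sxm => /le_trans; apply.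
apply: le_trans (LnormD_split _ _ _ q1) _; apply: lerD.
  apply: le_trans (rest g) _; apply: (ler_wpM2l (restriction_estimate_ge0 rest)).
  apply: le_trans (LnormG_supported p1 g_supp) _.
  by apply: LnormG_le_card; rewrite ?(lt_le_trans ltr01 p1) ?cabs_ge0.
apply: le_trans (LnormD_le_L2 _ _ _ hq) _; apply: ler_wpM2l; first exact: powR_ge0.
exact: LnormD_fourier_restrict_le.
Qed.

Lemma cabs_on_support_le : rho * s < N ->
  forall x, x \in S -> cabs (f x) <= K * (F + B) / (N - rho * s).
Proof.
move=> rho_lt x Sx; have D_gt0 : 0 < N - rho * s by rewrite subr_gt0.
have [xm Sxm xm_max] :
    exists2 xm, xm \in S & forall y, y \in S -> cabs (f y) <= cabs (f xm).
  by case: (arg_maxP (fun y => cabs (f y)) Sx) => xm; exists xm.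
rewrite ler_pdivlMr //; apply: le_trans (ler_wpM2r (ltW D_gt0) (xm_max x Sx)) _.
have -> : cabs (f xm) * (N - rho * s) = N * cabs (f xm) - rho * (s * cabs (f xm)) by ring.
by rewrite lerBlDr [leRHS]addrC; exact: max_on_support_le.
Qed.

End StrongAnnihilation.

Theorem theorem3p1 (R : realType) (G : finZmodType) (ghat : seq {ffun G -> R[i]})
  (Sigma : {pred {ffun G -> R[i]}}) (S : {set G}) (p q rho : R) :
  enumerates_dual ghat ->
  1 <= p <= 2 -> 1 <= q <= 2 ->
  restriction_estimate ghat Sigma p q rho ->
  rho * (#|S|%:R `^ p^-1) < (#|G|%:R) `^ (q^-1 - 2^-1) ->
  forall f : G -> R[i],
    LnormG 2 [pred x | true] f <=
      (1 + (#|S|%:R `^ 2^-1) *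
             ((size [seq chi <- ghat | chi \notin Sigma])%:R `^ (q^-1 - 2^-1)) /
           ((#|G|%:R) `^ (q^-1 - 2^-1) - rho * (#|S|%:R `^ p^-1)))
      * (LnormG 2 [pred x | x \notin S] f
         + LnormD 2 ghat [pred chi | chi \notin Sigma] (fun chi => fourier f chi)).
Proof.
move=> ghatP /andP[p1 _] hq rest rho_lt f.
have sup_le := cabs_on_support_le f ghatP p1 hq rest rho_lt.
move: rho_lt sup_le; set N := _ `^ (q^-1 - 2^-1); set s := _ `^ p^-1.
set K := (size _)%:R `^ _; set B := LnormG 2 [pred x | x \notin S] f.
set F := LnormD 2 ghat _ _ => rho_lt sup_le.
have D_gt0 : 0 < N - rho * s by rewrite subr_gt0.
have M_ge0 : 0 <= K * (F + B) / (N - rho * s).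
  by rewrite mulr_ge0 ?invr_ge0 ?(ltW D_gt0) ?mulr_ge0 ?addr_ge0 ?powR_ge0.
have L2_S : LnormG 2 S f <= #|S|%:R `^ 2^-1 * (K * (F + B) / (N - rho * s)).
  by apply: LnormG_le_card sup_le; rewrite ?ltr0n.
apply: le_trans (LnormG_split S f _) _; first by rewrite ler1n.
have -> : (1 + #|S|%:R `^ 2^-1 * K / (N - rho * s)) * (B + F) =
    B + F + #|S|%:R `^ 2^-1 * (K * (F + B) / (N - rho * s)) by ring.
have F_ge0 : 0 <= F by apply: powR_ge0.
apply: le_trans (lerD L2_S (lexx B)) _; lra.
Qed.
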